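(* Let $\lambda\ge1$ and $\phi=e^{\lambda\psi}$. There exist $h_1=h_1(\lambda)>0$ and $C_\lambda>0$ such that for all $0<h\le h_1$, all $\tau>0$, $0<\delta<1/2$, $\Delta t>0$, and every fully-discrete function $z=(z^{n+1/2})_{n=0}^M$ with $z^{n+1/2}_0=z^{n+1/2}_{N+1}=0$, writing $s=\tau\theta$, $$ \begin{aligned} \tau\lambda^2\iint_Q\bar{\mathtt t}^-(\theta)\phi|\partial_h\bar{\mathtt t}^-z|^2&\ge\tau\lambda^2\iint_Q\bar{\mathtt t}^-(\theta)\phi|\overline{\partial_h\bar{\mathtt t}^-z}|^2+\frac{h^2\tau\lambda^2}{4}\iint_Q\bar{\mathtt t}^-(\theta)\phi|\Delta_h\bar{\mathtt t}^-z|^2\\ &\quad-C_\lambda h^2\iint_Q\bar{\mathtt t}^-(s)|\partial_h\bar{\mathtt t}^-z|^2-C_\lambda\iint_Q\bar{\mathtt t}^-(sh)|\overline{\partial_h\bar{\mathtt t}^-z}|^2-C_\lambda h^4\iint_Q\bar{\mathtt t}^-(s)|\Delta_h\bar{\mathtt t}^-z|^2. \end{aligned} $$ (In the first integral $\phi$ is sampled at the dual points $x_{i+1/2}$, in the others at the primal points $x_i$.)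
   Context: Grids: $\Omega=(0,L)$, $h=L/(N+1)$, $\Delta t=T/M$, $x_i=ih$, $x_{i+1/2}=(i+\frac12)h$, $t_{n\pm1/2}=(n\pm\frac12)\Delta t$. For a primal space function $u$: $(\partial_hu)_{i+1/2}=(u_{i+1}-u_i)/h$ ($i=0,\dots,N$), $\overline{\partial_h u}_i=(u_{i+1}-u_{i-1})/(2h)$ and $(\Delta_hu)_i=(u_{i+1}-2u_i+u_{i-1})/h^2$ ($i=1,\dots,N$). $\int_\Omega$ of a primal function is $\sum_{i=1}^Nh u_i$, of a dual function $\sum_{i=0}^Nhv_{i+1/2}$. For $n=1,\dots,M$, $(\bar{\mathtt t}^-z)^n=z^{n-1/2}$ and $\bar{\mathtt t}^-(f)$ is a continuous $f$ evaluated at $t_{n-1/2}$; $\iint_QF=\sum_{n=1}^M\Delta t\int_\Omega F^n$. Weights: $\psi\in C^k(\overline{\tilde\Omega})$, $k$ large, positive on an open interval $\tilde\Omega\supset[0,L]$; $\theta(t)=1/((t+\delta T)(T+\delta T-t))$. *)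

From Stdlib Require Import Reals.
From Coquelicot Require Import Coquelicot.
Open Scope R_scope.

Definition Ck_on (k : nat) (a b : R) (f : R -> R) : Prop :=
  (forall n, (n <= k)%nat -> forall x, a < x < b -> ex_derive_n f n x) /\
  (forall x, a < x < b -> continuous (Derive_n f k) x).

(* Space grid: primal points x_i = i h, dual points x_{i+1/2} = (i+1/2) h. *)
Definition xp (h : R) (i : nat) : R := INR i * h.
Definition xd (h : R) (i : nat) : R := (INR i + /2) * h.

(* (partial_h u)_{i+1/2}, stored at index i (i = 0..N) *)
Definition dh (h : R) (u : nat -> R) (i : nat) : R := (u (S i) - u i) / h.
Definition dhc (h : R) (u : nat -> R) (i : nat) : R := (u (S i) - u (i - 1)%nat) / (2 * h).
Definition lap (h : R) (u : nat -> R) (i : nat) : R :=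
  (u (S i) - 2 * u i + u (i - 1)%nat) / (h ^ 2).

Definition pint (h : R) (N : nat) (u : nat -> R) : R := sum_n_m (fun i => h * u i) 1 N.
(* integral over Omega of a dual function (v i = v_{i+1/2}): sum_{i=0}^N h v_{i+1/2} *)
Definition dint (h : R) (N : nat) (v : nat -> R) : R := sum_n_m (fun i => h * v i) 0 N.
(* iint_Q F = sum_{n=1}^M dt (int_Omega F^n) ; here G n is int_Omega F^n *)
Definition tint (dt : R) (M : nat) (G : nat -> R) : R := sum_n_m (fun n => dt * G n) 1 M.

Definition tm (dt : R) (n : nat) : R := (INR n - /2) * dt.

Definition theta (T delta t : R) : R := / ((t + delta * T) * (T + delta * T - t)).

From Stdlib Require Import Reals Lra Lia.
From Coquelicot Require Import Coquelicot.
Open Scope R_scope.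

(* Write d_i = (partial_h w)_{i+1/2}.  At a primal point the centered difference
   and the Laplacian are the mean and the scaled jump of d_{i-1} and d_i, so
     |dhc w|_i^2 + h^2/4 |lap w|_i^2 = (d_{i-1}^2 + d_i^2) / 2.
   Summing against a weight omega and shifting the index, the primal side equals
   sum_i (omega_i + omega_{i+1})/2 d_i^2 minus two nonnegative boundary terms,
   while the dual side is sum_i omega_{i+1/2} d_i^2.  For omega = exp(lam psi),
   which is C^2 on [0,L], the midpoint value exceeds the mean of the endpoint
   values up to D h^2 (mean value theorem), and the defect D h^2 sum d_i^2 is
   absorbed by the term C h^2 iint s |partial_h z|^2.  The estimate then holds
   at every time level and is summed in time; the two remaining error terms are
   nonnegative. *)

Lemma sum_n_m_le_loc (a b : nat -> R) (n m : nat) :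
  (forall k, (n <= k <= m)%nat -> a k <= b k) -> sum_n_m a n m <= sum_n_m b n m.
Proof.
  revert n; induction m as [|m IHm]; intros n Hab.
  - destruct n.
    + rewrite !sum_n_n; apply Hab; lia.
    + rewrite !sum_n_m_zero by lia; apply Rle_refl.
  - destruct (Compare_dec.le_lt_dec n (S m)) as [Hn|Hn].
    + rewrite !sum_n_Sm by lia.
      apply Rplus_le_compat; [apply IHm | apply Hab]; intros; try apply Hab; lia.
    + rewrite !sum_n_m_zero by lia; apply Rle_refl.
Qed.

Lemma sum_n_m_nonneg (a : nat -> R) (n m : nat) :
  (forall k, (n <= k <= m)%nat -> 0 <= a k) -> 0 <= sum_n_m a n m.
Proof.
  intros Ha.
  assert (Hzero : sum_n_m (fun _ => 0) n m = 0) by exact (sum_n_m_const_zero n m).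
  rewrite <- Hzero; apply sum_n_m_le_loc; exact Ha.
Qed.

(* Coquelicot's generic sum lemmas, restated at type R so that rewriting and
   the real-arithmetic tactics see plain real addition and multiplication. *)
Lemma sum_n_m_plusR (a b : nat -> R) (n m : nat) :
  sum_n_m (fun k => a k + b k) n m = sum_n_m a n m + sum_n_m b n m.
Proof. exact (sum_n_m_plus a b n m). Qed.

Lemma sum_n_m_scalR (c : R) (a : nat -> R) (n m : nat) :
  sum_n_m (fun k => c * a k) n m = c * sum_n_m a n m.
Proof. exact (sum_n_m_mult_l c a n m). Qed.

Lemma sum_n_m_ext_locR (a b : nat -> R) (n m : nat) :
  (forall k, (n <= k <= m)%nat -> a k = b k) -> sum_n_m a n m = sum_n_m b n m.
Proof. exact (sum_n_m_ext_loc a b n m). Qed.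

Lemma sum_shift_pairs (P Q : nat -> R) (N : nat) :
  sum_n_m (fun i => P i + Q (i - 1)%nat) 1 N + P 0%nat + Q N
  = sum_n_m (fun i => P i + Q i) 0 N.
Proof.
  induction N as [|N IHN].
  - rewrite sum_n_m_zero by lia; rewrite sum_n_n; unfold zero; simpl; ring.
  - rewrite !sum_n_Sm by lia; unfold plus; simpl.
    rewrite <- IHN; replace (N - 0)%nat with N by lia; ring.
Qed.

(* The centered difference and the Laplacian at x_i are the mean and the jump
   of the two neighbouring one-sided differences; hence this Pythagoras-type
   identity, which trades |dhc|^2 + h^2/4 |lap|^2 for dual-point gradients. *)
Lemma centered_laplacian_split (h : R) (w : nat -> R) (i : nat) :
  h <> 0 -> (1 <= i)%nat ->
  dhc h w i ^ 2 + h ^ 2 / 4 * lap h w i ^ 2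
  = (dh h w (i - 1)%nat ^ 2 + dh h w i ^ 2) / 2.
Proof.
  intros Hh Hi; unfold dhc, lap, dh.
  replace (S (i - 1)) with i by lia.
  field; exact Hh.
Qed.

Lemma pint_scal (h c : R) (N : nat) (u : nat -> R) :
  pint h N (fun i => c * u i) = c * pint h N u.
Proof.
  unfold pint; rewrite <- sum_n_m_scalR; apply sum_n_m_ext_locR; intros; ring.
Qed.

Lemma dint_scal (h c : R) (N : nat) (v : nat -> R) :
  dint h N (fun i => c * v i) = c * dint h N v.
Proof.
  unfold dint; rewrite <- sum_n_m_scalR; apply sum_n_m_ext_locR; intros; ring.
Qed.

Lemma weighted_gradient_comparison (h D : R) (N : nat) (omega : R -> R) (w : nat -> R) :
  0 < h ->
  (forall i, 0 <= omega (xp h i)) ->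
  (forall i, (i <= N)%nat ->
     omega (xd h i) - (omega (xp h i) + omega (xp h (S i))) / 2 >= - D * h ^ 2) ->
  pint h N (fun i => omega (xp h i) * dhc h w i ^ 2)
  + h ^ 2 / 4 * pint h N (fun i => omega (xp h i) * lap h w i ^ 2)
  <= dint h N (fun i => omega (xd h i) * dh h w i ^ 2)
     + D * h ^ 2 * dint h N (fun i => dh h w i ^ 2).
Proof.
  intros Hh Homega Hmid.
  set (P := fun i => h * omega (xp h i) * dh h w i ^ 2 / 2).
  set (Q := fun i => h * omega (xp h (S i)) * dh h w i ^ 2 / 2).
  assert (Hprimal : pint h N (fun i => omega (xp h i) * dhc h w i ^ 2)
                    + h ^ 2 / 4 * pint h N (fun i => omega (xp h i) * lap h w i ^ 2)
                    = sum_n_m (fun i => P i + Q (i - 1)%nat) 1 N).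
  { rewrite <- pint_scal; unfold pint; rewrite <- sum_n_m_plusR.
    apply sum_n_m_ext_locR; intros i Hi; unfold P, Q.
    transitivity (h * omega (xp h i) * (dhc h w i ^ 2 + h ^ 2 / 4 * lap h w i ^ 2));
      [ring|].
    rewrite centered_laplacian_split by (lra || lia).
    replace (S (i - 1)) with i by lia; field. }
  assert (Hends : 0 <= P 0%nat + Q N).
  { unfold P, Q; pose proof (Homega 0%nat); pose proof (Homega (S N)).
    pose proof (pow2_ge_0 (dh h w 0%nat)); pose proof (pow2_ge_0 (dh h w N)).
    assert (0 <= h * omega (xp h 0%nat) * dh h w 0%nat ^ 2) by
      (apply Rmult_le_pos; [apply Rmult_le_pos|]; lra).
    assert (0 <= h * omega (xp h (S N)) * dh h w N ^ 2) by
      (apply Rmult_le_pos; [apply Rmult_le_pos|]; lra).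
    lra. }
  assert (Hdual : sum_n_m (fun i => P i + Q i) 0 N
                  <= dint h N (fun i => omega (xd h i) * dh h w i ^ 2)
                     + D * h ^ 2 * dint h N (fun i => dh h w i ^ 2)).
  { rewrite <- dint_scal; unfold dint; rewrite <- sum_n_m_plusR.
    apply sum_n_m_le_loc; intros i Hi; unfold P, Q.
    specialize (Hmid i ltac:(lia)); pose proof (pow2_ge_0 (dh h w i)).
    assert (0 <= h * dh h w i ^ 2) by (apply Rmult_le_pos; lra).
    nra. }
  pose proof (sum_shift_pairs P Q N); lra.
Qed.

Lemma mvt_subinterval (f df : R -> R) (lo hi u v : R) :
  lo <= u -> u <= v -> v <= hi ->
  (forall y, lo <= y <= hi -> is_derive f y (df y)) ->
  exists c, u <= c <= v /\ f v - f u = df c * (v - u).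
Proof.
  intros Hlo Huv Hhi Hd.
  destruct (MVT_gen f u v df) as [c [Hc Hf]];
    rewrite ?Rmin_left, ?Rmax_right in * by lra.
  - intros y Hy; apply Hd; lra.
  - intros y Hy; apply continuity_pt_filterlim.
    apply (ex_derive_continuous (K := R_AbsRing) (V := R_NormedModule)).
    exists (df y); apply Hd; lra.
  - exists c; split; assumption.
Qed.

(* Applying the mean value theorem three times writes the midpoint defect
   f(x+h/2) - (f x + f(x+h))/2 as -h/4 times f'' at some point c of [x,x+h]
   times a length k in [0,h]. *)
Lemma midpoint_defect_repr (f f1 f2 : R -> R) (lo hi x h : R) :
  (forall y, lo <= y <= hi -> is_derive f y (f1 y)) ->
  (forall y, lo <= y <= hi -> is_derive f1 y (f2 y)) ->
  lo <= x -> 0 < h -> x + h <= hi ->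
  exists c k, lo <= c <= hi /\ 0 <= k <= h /\
    f (x + h / 2) - (f x + f (x + h)) / 2 = - (h / 4) * (f2 c * k).
Proof.
  intros Hf Hf1 Hx Hh Hxh.
  destruct (mvt_subinterval f f1 lo hi x (x + h / 2)) as [c1 [Hc1 E1]]; try lra; auto.
  destruct (mvt_subinterval f f1 lo hi (x + h / 2) (x + h)) as [c2 [Hc2 E2]]; try lra; auto.
  destruct (mvt_subinterval f1 f2 lo hi c1 c2) as [c [Hc E]]; try lra; auto.
  exists c, (c2 - c1); split; [lra | split; [lra |]].
  replace (f (x + h / 2) - (f x + f (x + h)) / 2)
    with (((f (x + h / 2) - f x) - (f (x + h) - f (x + h / 2))) / 2) by field.
  rewrite E1, E2.
  replace (f1 c1 * (x + h / 2 - x) - f1 c2 * (x + h - (x + h / 2)))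
    with (- (h / 2) * (f1 c2 - f1 c1)) by field.
  rewrite E; field.
Qed.

(* A function that is C^2 on [lo,hi] is concave at midpoints up to O(h^2),
   uniformly on [lo,hi]; D is a quarter of the maximum of |f''|. *)
Lemma midpoint_defect_bound (f f1 f2 : R -> R) (lo hi : R) :
  lo <= hi ->
  (forall y, lo <= y <= hi -> is_derive f y (f1 y)) ->
  (forall y, lo <= y <= hi -> is_derive f1 y (f2 y)) ->
  (forall y, lo <= y <= hi -> continuity_pt f2 y) ->
  exists D, 0 <= D /\ forall x h, lo <= x -> 0 < h -> x + h <= hi ->
    f (x + h / 2) - (f x + f (x + h)) / 2 >= - D * h ^ 2.
Proof.
  intros Hlohi Hf Hf1 Hf2.
  destruct (continuity_ab_maj (fun y => Rabs (f2 y)) lo hi Hlohi) as [ymax [Hmax _]].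
  { intros y Hy; apply (continuity_pt_comp f2 Rabs); [apply Hf2; lra | apply Rcontinuity_abs]. }
  exists (Rabs (f2 ymax) / 4); split; [pose proof (Rabs_pos (f2 ymax)); lra |].
  intros x h Hx Hh Hxh.
  destruct (midpoint_defect_repr f f1 f2 lo hi x h) as [c [k [Hc [Hk ->]]]]; auto.
  assert (Hbound : f2 c * k <= Rabs (f2 ymax) * h).
  { apply Rle_trans with (Rabs (f2 c) * k).
    - apply Rmult_le_compat_r; [lra | apply Rle_abs].
    - apply Rmult_le_compat; [apply Rabs_pos | lra | apply Hmax; lra | lra]. }
  nra.
Qed.

(* The Carleman weight exp(lam psi) is C^2 wherever psi is three times
   differentiable (the third derivative gives continuity of psi''). *)
Lemma exp_weight_C2 (a b lam : R) (psi : R -> R) :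
  (forall n, (n <= 3)%nat -> forall x, a < x < b -> ex_derive_n psi n x) ->
  exists phi1 phi2 : R -> R,
    (forall x, a < x < b -> is_derive (fun y => exp (lam * psi y)) x (phi1 x)) /\
    (forall x, a < x < b -> is_derive phi1 x (phi2 x)) /\
    (forall x, a < x < b -> continuity_pt phi2 x).
Proof.
  intros Hpsi.
  set (d1 := Derive psi); set (d2 := Derive_n psi 2).
  assert (Hd0 : forall x, a < x < b -> is_derive psi x (d1 x)).
  { intros x Hx; apply Derive_correct; exact (Hpsi 1%nat ltac:(lia) x Hx). }
  assert (Hd1 : forall x, a < x < b -> is_derive d1 x (d2 x)).
  { intros x Hx; apply (Derive_correct d1); exact (Hpsi 2%nat ltac:(lia) x Hx). }
  assert (Hc : forall (g : R -> R) (g' x : R), is_derive g x g' -> continuous g x).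
  { intros g g' x Hg; apply (ex_derive_continuous (K := R_AbsRing) (V := R_NormedModule)).
    exists g'; exact Hg. }
  exists (fun x => exp (lam * psi x) * (lam * d1 x)),
         (fun x => exp (lam * psi x) * (lam * d1 x) * (lam * d1 x)
                   + exp (lam * psi x) * (lam * d2 x)).
  split; [| split].
  - intros x Hx; auto_derive; [exists (d1 x); auto |].
    replace (Derive (fun y => psi y) x) with (d1 x)
      by (symmetry; apply is_derive_unique; auto).
    ring.
  - intros x Hx; auto_derive; [repeat split; [exists (d1 x) | exists (d2 x)]; auto |].
    replace (Derive (fun y => psi y) x) with (d1 x)
      by (symmetry; apply is_derive_unique; auto).
    replace (Derive (fun y => d1 y) x) with (d2 x)
      by (symmetry; apply is_derive_unique; auto).
    ring.
  - intros x Hx; apply continuity_pt_filterlim.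
    assert (Hpsi_c : continuous psi x) by exact (Hc _ _ x (Hd0 x Hx)).
    assert (Hd1_c : continuous d1 x) by exact (Hc _ _ x (Hd1 x Hx)).
    assert (Hd2_c : continuous d2 x).
    { apply (ex_derive_continuous (K := R_AbsRing) (V := R_NormedModule)).
      exact (Hpsi 3%nat ltac:(lia) x Hx). }
    assert (He : continuous (fun y => exp (lam * psi y)) x)
      by (apply continuous_exp_comp, (continuous_scal_r lam psi), Hpsi_c).
    apply (continuous_plus (fun y => exp (lam * psi y) * (lam * d1 y) * (lam * d1 y))
                           (fun y => exp (lam * psi y) * (lam * d2 y)));
      repeat apply (continuous_mult (K := R_AbsRing)); first [assumption | apply continuous_const].
Qed.

(* On the uniform grid of [0,L] the dual point x_{i+1/2} is the midpoint of
   x_i and x_{i+1}, and both lie in [0,L] for i <= N; so a uniform midpoint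
   concavity bound on [0,L] applies at every cell. *)
Lemma grid_midpoint_defect (f : R -> R) (L D : R) (N i : nat) :
  0 < L -> (i <= N)%nat ->
  (forall x h, 0 <= x -> 0 < h -> x + h <= L ->
     f (x + h / 2) - (f x + f (x + h)) / 2 >= - D * h ^ 2) ->
  f (xd (L / (INR N + 1)) i)
  - (f (xp (L / (INR N + 1)) i) + f (xp (L / (INR N + 1)) (S i))) / 2
  >= - D * (L / (INR N + 1)) ^ 2.
Proof.
  intros HL Hi Hdef.
  set (h := L / (INR N + 1)).
  assert (HN : 0 < INR N + 1) by (pose proof (pos_INR N); lra).
  assert (Hh : 0 < h) by (apply Rdiv_lt_0_compat; lra).
  assert (HiN : INR i <= INR N) by (apply le_INR; exact Hi).
  assert (Hmid : xd h i = xp h i + h / 2) by (unfold xd, xp; field).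
  assert (Hnext : xp h (S i) = xp h i + h) by (unfold xp; rewrite S_INR; ring).
  rewrite Hmid, Hnext; apply Hdef.
  - unfold xp; apply Rmult_le_pos; [apply pos_INR | lra].
  - exact Hh.
  - unfold xp, h; apply (Rmult_le_reg_r (INR N + 1)); [exact HN |].
    field_simplify; [nra | lra].
Qed.

Lemma theta_pos_midtimes (T delta : R) (M n : nat) :
  0 < T -> 0 < delta -> (1 <= n <= M)%nat ->
  0 < theta T delta (tm (T / INR M) n).
Proof.
  intros HT Hdelta Hn; unfold theta, tm.
  assert (HM : 0 < INR M) by (apply lt_0_INR; lia).
  assert (Hn1 : 1 <= INR n) by (apply (le_INR 1); lia).
  assert (HnM : INR n <= INR M) by (apply le_INR; lia).
  set (t := (INR n - / 2) * (T / INR M)).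
  assert (Ht : t * INR M = T * (INR n - / 2)) by (unfold t; field; lra).
  assert (0 < t) by nra; assert (t < T) by nra.
  apply Rinv_0_lt_compat, Rmult_lt_0_compat; nra.
Qed.

Lemma energy_nonneg (dt h : R) (M N : nat) (c : nat -> R) (u : nat -> nat -> R) :
  0 <= dt -> 0 <= h -> (forall n, (1 <= n <= M)%nat -> 0 <= c n) ->
  0 <= tint dt M (fun n => pint h N (fun i => c n * u n i ^ 2)).
Proof.
  intros Hdt Hh Hc; apply sum_n_m_nonneg; intros n Hn.
  apply Rmult_le_pos; [exact Hdt |]; apply sum_n_m_nonneg; intros i _.
  apply Rmult_le_pos; [exact Hh |]; apply Rmult_le_pos; [auto | apply pow2_ge_0].
Qed.

Lemma tint_le (dt : R) (M : nat) (F G : nat -> R) :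
  0 <= dt -> (forall n, (1 <= n <= M)%nat -> F n <= G n) -> tint dt M F <= tint dt M G.
Proof.
  intros Hdt HFG; apply sum_n_m_le_loc; intros n Hn; apply Rmult_le_compat_l; auto.
Qed.

Lemma tint_plus (dt : R) (M : nat) (F G : nat -> R) :
  tint dt M (fun n => F n + G n) = tint dt M F + tint dt M G.
Proof.
  unfold tint; rewrite <- sum_n_m_plusR; apply sum_n_m_ext_locR; intros; ring.
Qed.

Lemma tint_scal (dt c : R) (M : nat) (F : nat -> R) :
  tint dt M (fun n => c * F n) = c * tint dt M F.
Proof.
  unfold tint; rewrite <- sum_n_m_scalR; apply sum_n_m_ext_locR; intros; ring.
Qed.

(* The estimate at one time level, with the time weight th >= 0 and the
   Carleman parameters tau, lam: apply the core comparison to the weight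
   th * phi and absorb the O(h^2) defect into lam^2 (D+1) h^2. *)
Lemma level_estimate (h D lam tau th : R) (N : nat) (phi : R -> R) (w : nat -> R) :
  0 < h -> 0 <= D -> 0 < tau -> 0 <= th -> (forall x, 0 <= phi x) ->
  (forall i, (i <= N)%nat ->
     phi (xd h i) - (phi (xp h i) + phi (xp h (S i))) / 2 >= - D * h ^ 2) ->
  tau * lam ^ 2 * pint h N (fun i => th * phi (xp h i) * dhc h w i ^ 2)
  + h ^ 2 * tau * lam ^ 2 / 4 * pint h N (fun i => th * phi (xp h i) * lap h w i ^ 2)
  <= tau * lam ^ 2 * dint h N (fun i => th * phi (xd h i) * dh h w i ^ 2)
     + lam ^ 2 * (D + 1) * h ^ 2 * dint h N (fun i => tau * th * dh h w i ^ 2).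
Proof.
  intros Hh HD Htau Hth Hphi Hmid.
  assert (Hcore := weighted_gradient_comparison h (th * D) N (fun x => th * phi x) w Hh).
  cbv beta in Hcore.
  assert (Hweighted : forall i, (i <= N)%nat ->
            th * phi (xd h i) - (th * phi (xp h i) + th * phi (xp h (S i))) / 2
            >= - (th * D) * h ^ 2).
  { intros i Hi; specialize (Hmid i Hi); nra. }
  specialize (Hcore (fun i => Rmult_le_pos _ _ Hth (Hphi _)) Hweighted).
  rewrite dint_scal.
  set (E := dint h N (fun i => dh h w i ^ 2)) in *.
  assert (HE : 0 <= E).
  { apply sum_n_m_nonneg; intros i _; apply Rmult_le_pos; [lra | apply pow2_ge_0]. }
  assert (Hscale : 0 <= tau * lam ^ 2) by (apply Rmult_le_pos; [lra | apply pow2_ge_0]).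
  assert (Hdefect : 0 <= tau * lam ^ 2 * th * h ^ 2 * E).
  { apply Rmult_le_pos; [apply Rmult_le_pos; [apply Rmult_le_pos |] |];
      try lra; apply pow2_ge_0. }
  apply Rmult_le_compat_l with (r := tau * lam ^ 2) in Hcore; [| exact Hscale].
  nra.
Qed.
Theorem lemma2 :
  exists K : nat, forall k : nat, (K <= k)%nat ->
  forall (L T : R), 0 < L -> 0 < T ->
  forall (a b : R) (psi : R -> R), a < 0 -> L < b ->
    Ck_on k a b psi -> (forall x, a < x < b -> 0 < psi x) ->
  forall lam : R, 1 <= lam ->
  exists h1 C : R, 0 < h1 /\ 0 < C /\
  forall (N M : nat) (tau delta : R) (z : nat -> nat -> R),
    let h := L / (INR N + 1) in
    let dt := T / INR M in
    let phi := fun x => exp (lam * psi x) in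
    let th := fun n => theta T delta (tm dt n) in
    h <= h1 -> 0 < tau -> 0 < delta < /2 -> (0 < M)%nat ->
    (forall n, (n <= M)%nat -> z n 0%nat = 0 /\ z n (S N) = 0) ->
    tau * lam ^ 2 *
      tint dt M (fun n => dint h N (fun i =>
        th n * phi (xd h i) * (dh h (z (n - 1)%nat) i) ^ 2))
    >=
    tau * lam ^ 2 *
      tint dt M (fun n => pint h N (fun i =>
        th n * phi (xp h i) * (dhc h (z (n - 1)%nat) i) ^ 2))
    + h ^ 2 * tau * lam ^ 2 / 4 *
      tint dt M (fun n => pint h N (fun i =>
        th n * phi (xp h i) * (lap h (z (n - 1)%nat) i) ^ 2))
    - C * h ^ 2 *
      tint dt M (fun n => dint h N (fun i =>
        tau * th n * (dh h (z (n - 1)%nat) i) ^ 2))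
    - C *
      tint dt M (fun n => pint h N (fun i =>
        tau * th n * h * (dhc h (z (n - 1)%nat) i) ^ 2))
    - C * h ^ 4 *
      tint dt M (fun n => pint h N (fun i =>
        tau * th n * (lap h (z (n - 1)%nat) i) ^ 2)).
Proof.
  exists 3%nat; intros k Hk L T HL HT a b psi Ha Hb [Hck _] _ lam Hlam.
  destruct (exp_weight_C2 a b lam psi (fun n Hn => Hck n (Nat.le_trans _ _ _ Hn Hk)))
    as [phi1 [phi2 [Hphi1 [Hphi2 Hcont]]]].
  destruct (midpoint_defect_bound (fun y => exp (lam * psi y)) phi1 phi2 0 L)
    as [D [HD Hdefect]];
    [lra | intros y Hy; apply Hphi1 | intros y Hy; apply Hphi2 | intros y Hy; apply Hcont | ];
    try lra.
  exists 1, (lam ^ 2 * (D + 1)); split; [lra | split; [nra |]].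
  intros N M tau delta z h dt phi th _ Htau Hdelta HM _.
  assert (Hh : 0 < h) by (apply Rdiv_lt_0_compat; [| pose proof (pos_INR N)]; lra).
  assert (Hdt : 0 < dt) by (apply Rdiv_lt_0_compat; [| apply lt_0_INR]; lia || lra).
  assert (Hth : forall n, (1 <= n <= M)%nat -> 0 < th n)
    by (intros; apply theta_pos_midtimes; lra || lia).
  assert (Htime := tint_le dt M _ _ (Rlt_le _ _ Hdt) (fun n Hn =>
    level_estimate h D lam tau (th n) N phi (z (n - 1)%nat) Hh HD Htau
      (Rlt_le _ _ (Hth n Hn)) (fun x => Rlt_le _ _ (exp_pos _))
      (fun i Hi => grid_midpoint_defect _ L D N i HL Hi Hdefect))).
  rewrite !tint_plus, !tint_scal in Htime.
  assert (Hcoef : forall n, (1 <= n <= M)%nat -> 0 <= tau * th n)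
    by (intros n Hn; pose proof (Hth n Hn); nra).
  assert (HF := energy_nonneg dt h M N (fun n => tau * th n * h)
                  (fun n => dhc h (z (n - 1)%nat)) (Rlt_le _ _ Hdt) (Rlt_le _ _ Hh)
                  (fun n Hn => Rmult_le_pos _ _ (Hcoef n Hn) (Rlt_le _ _ Hh))).
  assert (HG := energy_nonneg dt h M N (fun n => tau * th n)
                  (fun n => lap h (z (n - 1)%nat)) (Rlt_le _ _ Hdt) (Rlt_le _ _ Hh) Hcoef).
  cbv beta in HF, HG.
  assert (HC : 0 <= lam ^ 2 * (D + 1)) by nra.
  assert (Hh4 : 0 <= h ^ 4) by (apply pow_le; lra).
  pose proof (Rmult_le_pos _ _ HC HF) as HFC.
  pose proof (Rmult_le_pos _ _ (Rmult_le_pos _ _ HC Hh4) HG) as HGC.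
  lra.
Qed.
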